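(* Let $p$ be an odd prime and $x$ a $p$-adic integer. Let $m\in\{0,1,\ldots,p-1\}$ be the least nonnegative residue of $x$ modulo $p$, and put $t=(x-m)/p$. Suppose $m\leq (p-1)/2$. Then for integers $k$ we have $$ \binom{x}{k}\binom{x+k}{k}\equiv\binom{m}{k}\binom{m+k}{k}\bigl(1+ptH_{m+k}-ptH_{m-k}\bigr)\pmod{p^2}\quad\text{if } 0\leq k\leq m, $$ and $$ \binom{x}{k}\binom{x+k}{k}\equiv \frac{(-1)^mp^2t(t+1)}{k(k-m)\binom{m}{p-k}\binom{k}{m}}\pmod{p^3}\quad\text{if } p-m\leq k\leq p-1. $$ Moreover, if $m<(p-1)/2$ and $m+1\leq k\leq p-1-m$, then $$ \binom{x}{k}\binom{x+k}{k}\equiv\frac{(-1)^{m+k+1}pt\binom{m+k}{k}}{(k-m)\binom{k}{m}}\bigl(1+ptH_{m+k}-ptH_{k-m-1}\bigr)\pmod{p^3}. $$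
   Context: For a $p$-adic integer $y$ and a nonnegative integer $k$, $\binom{y}{k}=y(y-1)\cdots(y-k+1)/k!$. $H_n=\sum_{i=1}^n 1/i$ denotes the $n$th harmonic number ($H_0=0$). Congruences between $p$-adic numbers modulo $p^r$ mean the difference divided by $p^r$ is a $p$-adic integer. *)

From mathcomp Require Import all_boot all_order all_algebra.
Set Implicit Arguments. Unset Strict Implicit. Unset Printing Implicit Defensive.
Import Order.TTheory GRing.Theory Num.Theory.
Local Open Scope ring_scope.

(* A p-adic integer, represented as a coherent sequence of integer
   approximations: x_(n+1) = x_n (mod p^n).  The p-adic integer is the limit
   x = lim x_n, so that x = x_n (mod p^n) for every n. *)
Record padic_int (p : nat) := PadicInt {
  pa : nat -> int;
  pa_coh : forall n : nat, (pa n.+1 = pa n %[mod (p ^ n)%:Z])%Z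
}.

Definition pint (p : nat) (q : rat) : bool := ~~ ((p%:Z) %| denq q)%Z.

Definition binq (y : rat) (k : nat) : rat :=
  (\prod_(i < k) (y - i%:R)) / (k`!)%:R.

Definition harm (n : nat) : rat := \sum_(i < n) ((i.+1)%:R)^-1.

(* f(x) = g(x) (mod p^r) in Z_p, for functions f, g given by (continuous,
   here rational-coefficient polynomial) expressions in x: the value at x is
   the p-adic limit of the values at the approximations x_n, and p^r Z_p is
   open and closed, so the congruence means that eventually
   (f(x_n) - g(x_n)) / p^r is p-integral. *)
Definition padic_cong (p : nat) (x : padic_int p) (r : nat)
    (f g : rat -> rat) : Prop :=
  exists N : nat, forall n : nat, (N <= n)%N ->
    pint p ((f (pa x n)%:~R - g (pa x n)%:~R) / (p ^ r)%:R).

From HB Require Import structures.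
From mathcomp Require Import all_boot all_order all_algebra.
From mathcomp Require Import ring zify.
Set Implicit Arguments. Unset Strict Implicit. Unset Printing Implicit Defensive.
Import Order.TTheory GRing.Theory Num.Theory.
Local Open Scope ring_scope.

(* Write x = m + u with u = p t.  The factors x - i (i < m) and x + k - i
   (i < k, m + k < p) of the numerators are units of Z_(p) shifted by u, and a
   product of such factors gives binq (a + u) k = C(a, k) (1 + u (H_a - H_(a-k)))
   modulo C(a, k) u^2 Z_(p); this is the case k <= m.  For m < k the factor
   x - m = u appears as well, so binq x k = (-1)^(k-m-1) u / ((k-m) C(k, m))
   (1 + u (H_m - H_(k-m-1))), which gives the case m < k <= p-1-m.  For
   k >= p - m, x + k has the residue m + k - p < k, so binq (x + k) k carries
   the factor p (t + 1); the product is p^2 t (t + 1) times a constant that is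
   computed modulo p from C(p-1-n, r) = (-1)^r C(n+r, r) (mod p). *)

Lemma harmS n : harm n.+1 = harm n + n.+1%:R^-1.
Proof. by rewrite /harm big_ord_recr. Qed.

Lemma harmB a k : (k <= a)%N -> harm a - harm (a - k) = \sum_(i < k) (a - i)%:R^-1.
Proof.
elim: k => [|k IH] le_ka; first by rewrite subn0 subrr big_ord0.
have e : (a - k = (a - k.+1).+1)%N by lia.
by rewrite big_ord_recr /= -IH ?(ltnW le_ka) // e harmS -e; ring.
Qed.

Lemma prod_rising n r : \prod_(i < r) (n.+1 + i)%N = (n + r) ^_ r.
Proof.
elim: r => [|r IH]; first by rewrite big_ord0.
by rewrite big_ord_recr IH /= addnS ffactSS mulnC addSn.
Qed.

Lemma binq_oppS n r : binq (- n.+1%:R) r = (-1) ^+ r * 'C(n + r, r)%:R.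
Proof.
rewrite /binq (eq_bigr (fun i : 'I_r => - (n.+1 + i)%N%:R)); last first.
  by move=> i _; rewrite natrD opprD.
rewrite prodrN card_ord -natr_prod prod_rising -bin_ffact natrM -mulrA mulfK //.
by rewrite pnatr_eq0 -lt0n fact_gt0.
Qed.

Lemma signr_add_double (R : pzRingType) a b c :
  a = (b + c.*2)%N -> (-1) ^+ a = (-1) ^+ b :> R.
Proof. by move=> ->; rewrite exprD -mul2n exprM sqrrN !expr1n mulr1. Qed.

Lemma pa_modp p (x : padic_int p) n : (0 < n)%N -> (pa x n = pa x 1 %[mod p%:Z])%Z.
Proof.
elim: n => [|[|n] IH] // _; rewrite -(IH isT); apply/eqP; rewrite eqz_mod_dvd.
have : (p%:Z %| (p ^ n.+1)%:Z)%Z by rewrite dvdzE /= dvdn_exp.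
by move/dvdz_trans; apply; rewrite -eqz_mod_dvd; apply/eqP; exact: pa_coh.
Qed.

Section LocalRing.
Variable p : nat.
Hypothesis p_prime : prime p.

Lemma p_neq0 : p%:R != 0 :> rat.
Proof. by rewrite pnatr_eq0 -lt0n prime_gt0. Qed.

Lemma pintP q : reflect (exists a b : int, ~~ (p%:Z %| b)%Z /\ q = a%:~R / b%:~R) (pint p q).
Proof.
apply: (iffP idP) => [pq | [a [b [pNb ->]]]].
  by exists (numq q), (denq q); rewrite divq_num_den.
have b_neq0 : b != 0 by apply: contraNneq pNb => ->; rewrite dvdz0.
set r : rat := a%:~R / b%:~R.
have den_dvd : (denq r %| b)%Z.
  have num_den : numq r * b = a * denq r.
    apply/eqP; rewrite -(eqr_int rat) !rmorphM /= numqE /r; apply/eqP.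
    by field; rewrite intr_eq0.
  have : (denq r %| numq r * b)%Z by rewrite num_den dvdz_mull.
  by rewrite Gauss_dvdzr // coprimezE coprime_sym coprime_num_den.
by apply: contra pNb => /dvdz_trans; apply.
Qed.

Lemma pint_subring : subring_closed (pint p).
Proof.
have pNdvdM (a b : int) : ~~ (p%:Z %| a)%Z -> ~~ (p%:Z %| b)%Z -> ~~ (p%:Z %| a * b)%Z.
  by rewrite !dvdzE abszM Euclid_dvdM // negb_or => -> ->.
have neq0 (b : int) : ~~ (p%:Z %| b)%Z -> b%:~R != 0 :> rat.
  by apply: contraNneq => /eqP; rewrite intr_eq0 => /eqP ->; rewrite dvdz0.
split.
- apply/pintP; exists 1, 1; rewrite divr1 dvdzE /= dvdn1.
  by case: eqP p_prime => // ->.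
- move=> _ _ /pintP[a [b [pNb ->]]] /pintP[c [d [pNd ->]]]; apply/pintP.
  exists (a * d - c * b), (b * d); split; first exact: pNdvdM.
  by rewrite rmorphB !rmorphM /=; field; rewrite !neq0.
- move=> _ _ /pintP[a [b [pNb ->]]] /pintP[c [d [pNd ->]]]; apply/pintP.
  exists (a * c), (b * d); split; first exact: pNdvdM.
  by rewrite !rmorphM /=; field; rewrite !neq0.
Qed.

HB.instance Definition _ := GRing.isSubringClosed.Build rat (pint p) pint_subring.

Lemma pint_invn n : ~~ (p %| n)%N -> n%:R^-1 \in pint p.
Proof. by move=> pNn; apply/pintP; exists 1, n; rewrite div1r dvdzE. Qed.

Lemma prime_ndvd_fact n : (n < p)%N -> ~~ (p %| n`!)%N.
Proof.
elim: n => [|n IH] lt_np; first by rewrite dvdn1; case: eqP p_prime => // ->.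
by rewrite factS Euclid_dvdM // negb_or gtnNdvd // IH // ltnW.
Qed.

Lemma pint_inv_bin k m : (m <= k < p)%N -> 'C(k, m)%:R^-1 \in pint p.
Proof.
move=> /andP[le_mk lt_kp]; apply: pint_invn; have := prime_ndvd_fact lt_kp.
by apply: contra => /dvdn_trans; apply; rewrite -(bin_fact le_mk) dvdn_mulr.
Qed.

Definition approx (u c A x : rat) :=
  A \in pint p /\ exists2 R, R \in pint p & x = c * (1 + u * A + u ^+ 2 * R).

Section FirstOrder.
Variable u : rat.
Hypothesis u_int : u \in pint p.

Lemma approxM c1 c2 A1 A2 x1 x2 :
  approx u c1 A1 x1 -> approx u c2 A2 x2 -> approx u (c1 * c2) (A1 + A2) (x1 * x2).
Proof.
move=> [A1Z [R1 R1Z ->]] [A2Z [R2 R2Z ->]]; split; first exact: rpredD.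
exists (R1 + R2 + A1 * A2 + u * (A1 * R2 + A2 * R1) + u ^+ 2 * R1 * R2); last by ring.
by rewrite ?(rpredD, rpredM, rpredX).
Qed.

Lemma approx_const c : approx u c 0 c.
Proof. by split; [exact: rpred0 | exists 0; [exact: rpred0 | ring]]. Qed.

Lemma approx_prod n (c : nat -> rat) :
    (forall i, (i < n)%N -> c i != 0 /\ (c i)^-1 \in pint p) ->
  approx u (\prod_(i < n) c i) (\sum_(i < n) (c i)^-1) (\prod_(i < n) (c i + u)).
Proof.
elim: n => [|n IH] c_unit; first by rewrite !big_ord0; exact: approx_const.
rewrite !big_ord_recr /=; apply: approxM.
  by apply: IH => i lt_in; apply: c_unit; rewrite ltnW.
have [cn_neq0 cnVZ] := c_unit n (ltnSn n).
by split=> //; exists 0; [exact: rpred0 | field].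
Qed.

Lemma approx_linear c A x : approx u c A x -> exists2 W, W \in pint p & x = c * (1 + u * W).
Proof.
by move=> [AZ [R RZ ->]]; exists (A + u * R); [rewrite rpredD ?rpredM | ring].
Qed.

Lemma approx_ffact a k : (k <= a < p)%N ->
  approx u (a ^_ k)%:R (harm a - harm (a - k)) (\prod_(i < k) (a%:R + u - i%:R)).
Proof.
move=> /andP[le_ka lt_ap].
have -> : \prod_(i < k) (a%:R + u - i%:R) = \prod_(i < k) ((a - i)%:R + u).
  by apply: eq_bigr => i _; rewrite natrB ?(leq_trans (ltnW (ltn_ord i))) //; ring.
rewrite ffact_prod natr_prod harmB //.
apply: (approx_prod (c := fun i => (a - i)%:R)) => i lt_ik.
have gt0 : (0 < a - i)%N by rewrite subn_gt0 (leq_trans lt_ik).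
split; first by rewrite pnatr_eq0 -lt0n.
by apply: pint_invn; rewrite gtnNdvd // (leq_ltn_trans (leq_subr _ _)).
Qed.

Lemma binq_approx a k : (k <= a < p)%N ->
  approx u 'C(a, k)%:R (harm a - harm (a - k)) (binq (a%:R + u) k).
Proof.
move=> le_ka_p; have := approxM (approx_ffact le_ka_p) (approx_const k`!%:R^-1).
by rewrite addr0 -bin_ffact natrM mulfK // pnatr_eq0 -lt0n fact_gt0.
Qed.

Lemma binq_approx_above m k : (m < k < p)%N ->
  approx u ((-1) ^+ (k - m.+1) * u / ((k - m)%:R * 'C(k, m)%:R))
    (harm m - harm (k - m.+1)) (binq (m%:R + u) k).
Proof.
move=> /andP[lt_mk lt_kp]; set d := (k - m.+1)%N.
have k_eq : k = (m + d.+1)%N by rewrite /d; lia.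
have prod_split : \prod_(i < k) (m%:R + u - i%:R) =
    \prod_(i < m) (m%:R + u - i%:R) * (u * \prod_(j < d) (- j.+1%:R + u)).
  rewrite k_eq big_split_ord big_ord_recl /=; congr (_ * (_ * _)).
    by rewrite addn0; ring.
  by apply: eq_bigr => j _; rewrite /bump add1n natrD; ring.
have prod_neg : \prod_(j < d) (- j.+1%:R) = (-1) ^+ d * d`!%:R :> rat.
  by rewrite prodrN card_ord fact_prod big_add1 big_mkord natr_prod.
have sum_neg : \sum_(j < d) (- j.+1%:R)^-1 = - harm d.
  by rewrite /harm -sumrN; apply: eq_bigr => j _; rewrite invrN.
have fact_k : k`!%:R = 'C(k, m)%:R * m`!%:R * ((k - m)%:R * d`!%:R) :> rat.
  have km : (k - m = d.+1)%N by rewrite /d; lia.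
  by rewrite -(bin_fact (ltnW lt_mk)) km factS !natrM; ring.
have m_ok : (m <= m < p)%N by rewrite leqnn (ltn_trans lt_mk).
have neg_unit j : (j < d)%N -> - j.+1%:R != 0 :> rat /\ (- j.+1%:R)^-1 \in pint p.
  move=> lt_jd; rewrite oppr_eq0 pnatr_eq0 invrN rpredN; split=> //.
  by apply: pint_invn; rewrite gtnNdvd //; lia.
have := approxM (approxM (approx_ffact m_ok)
  (approxM (approx_const u) (approx_prod neg_unit))) (approx_const k`!%:R^-1).
rewrite ffactnn subnn prod_neg sum_neg -prod_split.
have -> : harm m - harm d = harm m - harm 0 + (0 + - harm d) + 0.
  by rewrite /harm big_ord0; ring.
rewrite (_ : (-1) ^+ d * u / _ = m`!%:R * (u * ((-1) ^+ d * d`!%:R)) / k`!%:R) //.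
by rewrite fact_k; field; rewrite !pnatr_eq0 -!lt0n !fact_gt0 subn_gt0 lt_mk bin_gt0 ltnW.
Qed.

End FirstOrder.

Definition pcong (r : nat) (a b : rat) := (a - b) / (p ^ r)%:R \in pint p.

Lemma binq_prod_low m k t : t \in pint p -> (k <= m)%N -> (m + k < p)%N ->
  pcong 2 (binq (m%:R + p%:R * t) k * binq (m%:R + p%:R * t + k%:R) k)
    ('C(m, k)%:R * 'C(m + k, k)%:R *
       (1 + p%:R * t * harm (m + k) - p%:R * t * harm (m - k))).
Proof.
move=> tZ le_km lt_mk_p; set u := p%:R * t.
have uZ : u \in pint p by rewrite rpredM ?rpred_nat.
have -> : m%:R + u + k%:R = (m + k)%:R + u by rewrite natrD; ring.
have m_ok : (k <= m < p)%N by rewrite le_km; lia.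
have mk_ok : (k <= m + k < p)%N by rewrite leq_addl.
have [_ [R RZ ->]] := approxM uZ (binq_approx uZ m_ok) (binq_approx uZ mk_ok).
rewrite /pcong (_ : _ / _ = 'C(m, k)%:R * 'C(m + k, k)%:R * t ^+ 2 * R).
  by rewrite ?(rpredM, rpredX, rpred_nat).
by rewrite /u natrX addnK; field; exact: p_neq0.
Qed.

Lemma binq_prod_mid m k t : t \in pint p -> (m < k)%N -> (m + k < p)%N ->
  pcong 3 (binq (m%:R + p%:R * t) k * binq (m%:R + p%:R * t + k%:R) k)
    ((-1) ^+ (m + k + 1) * p%:R * t * 'C(m + k, k)%:R / ((k%:R - m%:R) * 'C(k, m)%:R) *
       (1 + p%:R * t * harm (m + k) - p%:R * t * harm (k - m - 1))).
Proof.
move=> tZ lt_mk lt_mk_p; set u := p%:R * t.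
have uZ : u \in pint p by rewrite rpredM ?rpred_nat.
have -> : m%:R + u + k%:R = (m + k)%:R + u by rewrite natrD; ring.
have m_ok : (m < k < p)%N by rewrite lt_mk; lia.
have mk_ok : (k <= m + k < p)%N by rewrite leq_addl.
have [_ [R RZ ->]] := approxM uZ (binq_approx_above uZ m_ok) (binq_approx uZ mk_ok).
have -> : (-1) ^+ (m + k + 1) = (-1) ^+ (k - m.+1) :> rat.
  by apply: (@signr_add_double _ _ _ m.+1); lia.
rewrite addnK -subnDA addn1 -natrB ?(ltnW lt_mk) // /pcong.
rewrite (_ : _ / _ = (-1) ^+ (k - m.+1) * 'C(m + k, k)%:R * (k - m)%:R^-1 *
                     'C(k, m)%:R^-1 * t ^+ 3 * R).
  rewrite ?(rpredM, rpredX, rpredN, rpred1, rpred_nat) //.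
    by apply: pint_invn; rewrite gtnNdvd ?subn_gt0 //; lia.
  by apply: pint_inv_bin; rewrite ltnW //; lia.
rewrite /u natrX; field.
by rewrite p_neq0 !pnatr_eq0 -!lt0n subn_gt0 lt_mk bin_gt0 ltnW.
Qed.

Lemma bin_reflect_cong n r : (n + r < p)%N ->
  pcong 1 'C(p.-1 - n, r)%:R ((-1) ^+ r * 'C(n + r, r)%:R).
Proof.
move=> lt_nr_p; set N := (p.-1 - (n + r))%N.
have oppZ : - p%:R \in pint p by rewrite rpredN rpred_nat.
have nr_ok : (r <= n + r < p)%N by rewrite leq_addl.
have [W WZ eW] := approx_linear oppZ (binq_approx oppZ nr_ok).
have eN : (N.+1 + (n + r) = p)%N by rewrite /N; lia.
rewrite [in binq _ _](_ : _ + _ = - N.+1%:R) in eW; last by rewrite -eN !natrD; ring.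
rewrite binq_oppS (_ : N + r = p.-1 - n)%N in eW; last by rewrite /N; lia.
rewrite /pcong -[X in X - _](signrMK r) eW expn1.
rewrite (_ : _ / _ = - ((-1) ^+ r * 'C(n + r, r)%:R * W)).
  by rewrite rpredN ?(rpredM, rpredX, rpredN, rpred1, rpred_nat).
by field; exact: p_neq0.
Qed.

Lemma high_coef_cong m k : (m + m < p)%N -> (p - m <= k)%N -> (k <= p - 1)%N ->
  pcong 1 ((-1) ^+ (k - m.+1) * (-1) ^+ (p - m.+1) / ((p - m)%:R * 'C(k, p - m)%:R))
          ((-1) ^+ m / (k%:R * 'C(m, p - k)%:R)).
Proof.
move=> lt_2m_p le_pm_k le_k_p1; set j := (p - k)%N.
have le_jm : (j <= m)%N by rewrite /j; lia.
have hB : pcong 1 'C(k.-1, m - j)%:R ((-1) ^+ (m - j) * 'C(m, j)%:R).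
  have lt_m_p : (j + (m - j) < p)%N by rewrite subnKC //; lia.
  have := bin_reflect_cong lt_m_p.
  by rewrite subnKC // bin_sub // (_ : p.-1 - j = k.-1)%N // /j; lia.
have kB : (p - m)%:R * 'C(k, p - m)%:R = k%:R * 'C(k.-1, m - j)%:R :> rat.
  rewrite -!natrM (_ : p - m = (p - m.+1).+1)%N; last by lia.
  rewrite -mul_bin_diag -(bin_sub (_ : m - j <= k.-1)%N); last by rewrite /j; lia.
  by rewrite (_ : k.-1 - (m - j) = p - m.+1)%N // /j; lia.
have sign : (-1) ^+ (k - m.+1) * (-1) ^+ (p - m.+1) = (-1) ^+ m * (-1) ^+ (m - j) :> rat.
  by rewrite -!exprD; apply: (@signr_add_double _ _ _ (p - m.*2 - 1)); rewrite /j; lia.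
rewrite sign kB /pcong.
rewrite (_ : _ / _ = - (('C(k.-1, m - j)%:R - (-1) ^+ (m - j) * 'C(m, j)%:R) / (p ^ 1)%:R *
    ((-1) ^+ m * k%:R^-1 * 'C(k.-1, m - j)%:R^-1 * 'C(m, j)%:R^-1))).
  rewrite rpredN rpredM // ?(rpredM, rpredX, rpredN, rpred1) //.
  - by apply: pint_invn; rewrite gtnNdvd //; lia.
  - by apply: pint_inv_bin; rewrite /j; lia.
  - by apply: pint_inv_bin; lia.
rewrite expn1; field.
by rewrite p_neq0 !pnatr_eq0 -!lt0n !bin_gt0 le_jm /=; apply/andP; split; rewrite /j; lia.
Qed.

Lemma binq_prod_high m k t : t \in pint p -> (m + m < p)%N ->
    (p - m <= k)%N -> (k <= p - 1)%N ->
  pcong 3 (binq (m%:R + p%:R * t) k * binq (m%:R + p%:R * t + k%:R) k)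
    ((-1) ^+ m * p%:R ^+ 2 * t * (t + 1) /
       (k%:R * (k%:R - m%:R) * 'C(m, p - k)%:R * 'C(k, m)%:R)).
Proof.
move=> tZ lt_2m_p le_pm_k le_k_p1; set i := (m + k - p)%N.
have lt_mk : (m < k)%N by lia.
have lt_ik : (i < k)%N by rewrite /i; lia.
have m_ok : (m < k < p)%N by rewrite lt_mk; lia.
have i_ok : (i < k < p)%N by rewrite lt_ik; lia.
have u1Z : p%:R * t \in pint p by rewrite rpredM ?rpred_nat.
have u2Z : p%:R * (t + 1) \in pint p by rewrite rpredM ?rpredD ?rpred_nat ?rpred1.
have -> : m%:R + p%:R * t + k%:R = i%:R + p%:R * (t + 1).
  by rewrite /i natrB ?natrD; [ring | lia].
have [W1 W1Z ->] := approx_linear u1Z (binq_approx_above u1Z m_ok).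
have [W2 W2Z ->] := approx_linear u2Z (binq_approx_above u2Z i_ok).
rewrite -[in 'C(k, i)](bin_sub (ltnW lt_ik)).
rewrite (_ : k - i.+1 = p - m.+1)%N; last by rewrite /i; lia.
rewrite (_ : k - i = p - m)%N; last by rewrite /i; lia.
pose Q : rat := (-1) ^+ (k - m.+1) * (-1) ^+ (p - m.+1) / ((p - m)%:R * 'C(k, p - m)%:R).
pose Q' : rat := (-1) ^+ m / (k%:R * 'C(m, p - k)%:R).
have QQ' : pcong 1 Q Q' := high_coef_cong lt_2m_p le_pm_k le_k_p1.
have QZ : Q \in pint p.
  rewrite /Q invfM !rpredM ?rpred_sign //.
    by apply: pint_invn; rewrite gtnNdvd //; lia.
  by apply: pint_inv_bin; lia.
rewrite -natrB ?(ltnW lt_mk) // /pcong.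
rewrite (_ : (_ - _) / (p ^ 3)%:R = t * (t + 1) * (k - m)%:R^-1 * 'C(k, m)%:R^-1 *
    ((Q - Q') / (p ^ 1)%:R + Q * (t * W1 + (t + 1) * W2 + p%:R * t * (t + 1) * W1 * W2)));
  last first.
  rewrite /Q /Q' natrX expn1; field.
  by rewrite p_neq0 !pnatr_eq0 -!lt0n !bin_gt0 !subn_gt0 /=; apply/and5P; split; lia.
(* Q is made opaque so that the membership rewrites below do not unfold it. *)
clearbody Q Q'; set E := (Q - Q') / _.
have EZ : E \in pint p := QQ'.
clearbody E; rewrite ?(rpredM, rpredD, rpred1, rpred_nat) //.
- by apply: pint_invn; rewrite gtnNdvd ?subn_gt0 //; lia.
- by apply: pint_inv_bin; lia.
Qed.

Lemma padic_cong_residue (x : padic_int p) m r (f g : rat -> rat) :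
    (pa x 1 = m%:Z %[mod p%:Z])%Z ->
    (forall t, t \in pint p -> pcong r (f (m%:R + p%:R * t)) (g (m%:R + p%:R * t))) ->
  padic_cong x r f g.
Proof.
move=> x1 fg; exists 1%N => n n_gt0.
have /dvdzP[t xn] : (p%:Z %| pa x n - m%:Z)%Z by rewrite -eqz_mod_dvd (pa_modp x n_gt0) x1.
have -> : pa x n = m%:Z + p%:Z * t by rewrite mulrC -xn; ring.
by rewrite rmorphD rmorphM; apply: fg; exact: rpred_int.
Qed.

End LocalRing.

Theorem lemma2p1 (p : nat) (x : padic_int p) (m : nat) :
  prime p -> odd p ->
  (m < p)%N -> (pa x 1 = m%:Z %[mod p%:Z])%Z ->
  (m <= (p - 1)./2)%N ->
  let t := fun y : rat => (y - m%:R) / p%:R in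
  let L := fun (k : nat) (y : rat) => binq y k * binq (y + k%:R) k in
  (forall k : nat, (k <= m)%N ->
     padic_cong x 2 (L k)
       (fun y => ('C(m, k))%:R * ('C(m + k, k))%:R *
          (1 + p%:R * t y * harm (m + k) - p%:R * t y * harm (m - k))))
  /\
  (forall k : nat, (p - m <= k)%N -> (k <= p - 1)%N ->
     padic_cong x 3 (L k)
       (fun y => (-1) ^+ m * (p%:R) ^+ 2 * t y * (t y + 1) /
          (k%:R * (k%:R - m%:R) * ('C(m, p - k))%:R * ('C(k, m))%:R)))
  /\
  ((m < (p - 1)./2)%N ->
   forall k : nat, (m + 1 <= k)%N -> (k <= p - 1 - m)%N ->
     padic_cong x 3 (L k)
       (fun y => (-1) ^+ (m + k + 1) * p%:R * t y * ('C(m + k, k))%:R /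
          ((k%:R - m%:R) * ('C(k, m))%:R) *
          (1 + p%:R * t y * harm (m + k) - p%:R * t y * harm (k - m - 1)))).
Proof.
move=> p_prime _ _ x1 le_m_half t L.
have lt_2m_p : (m + m < p)%N.
  by move: le_m_half (prime_gt1 p_prime); rewrite geq_half_double -addnn; lia.
have tE s : t (m%:R + p%:R * s) = s by rewrite /t; field; exact: p_neq0.
split; [|split].
- move=> k le_km; apply: (padic_cong_residue p_prime x1) => s sZ.
  by rewrite /L tE; apply: binq_prod_low => //; lia.
- move=> k le_pm_k le_k_p1; apply: (padic_cong_residue p_prime x1) => s sZ.
  by rewrite /L tE; exact: binq_prod_high.
- move=> _ k lt_mk le_k_pm; apply: (padic_cong_residue p_prime x1) => s sZ.
  by rewrite /L tE; apply: binq_prod_mid => //; lia.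
Qed.
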